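(* Let $\gamma$ be a meromorphic family in $\mathrm{GL}_n(\mathbb C)$ with exponents $m_1\ge\dots\ge m_n$, let $k_1>\dots>k_\tau$ be the distinct values among the $m_i$, and let $\alpha_j$ be the number of indices $i$ with $m_i=k_j$. Then (a) for each $j$ the limit $P_j:=\lim_{z\to0}\mathrm{graph}(z^{k_j}\gamma(z))$ exists in the Grassmannian $\mathrm{Gr}_n$ of $n$-dimensional subspaces of $\mathbb C^n\oplus\mathbb C^n$, and $\mathrm{rk}\,P_j=\alpha_j$; (b) the collection $\mathcal P^\gamma=(P_1,\dots,P_\tau)$ is a hinge.
   Context: A meromorphic family is a map $\gamma$ from a punctured disc $0<|z|<\varepsilon$ to $\mathrm{GL}_n(\mathbb C)$ whose matrix entries are holomorphic there with poles or removable singularities at $0$. Every such $\gamma$ can be written $\gamma(z)=a(z)\,\mathrm{diag}(z^{-m_1},\dots,z^{-m_n})\,b(z)$ with $a,b$ holomorphic near $0$ with $a(0),b(0)$ invertible and integers $m_1\ge\dots\ge m_n$ uniquely determined by $\gamma$; these are the exponents. For a subspace (linear relation) $P\subset V\oplus V$, $V=\mathbb C^n$: $\mathrm{Ker}\,P=\{v:v\oplus0\in P\}$, $\mathrm{Dom}\,P$ and $\mathrm{Im}\,P$ are the projections of $P$ to the first and second summands, $\mathrm{Indef}\,P=\{w:0\oplus w\in P\}$, $\mathrm{rk}\,P=\dim\mathrm{Dom}\,P-\dim\mathrm{Ker}\,P$. A hinge is a sequence $(P_1,\dots,P_k)$ of $n$-dimensional subspaces of $V\oplus V$ such that $\mathrm{Ker}\,P_j=\mathrm{Dom}\,P_{j+1}$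 and $\mathrm{Im}\,P_j=\mathrm{Indef}\,P_{j+1}$ for $1\le j\le k-1$, $\mathrm{Dom}\,P_1=V$, $\mathrm{Im}\,P_k=V$, and $\mathrm{rk}\,P_j>0$ for all $j$. *)

(* Complex numbers: C R := R[i] (from
   mathcomp-real-closed) for R : realType, viewed (via ^o) as a normed field
   over itself, so that [derivable] is complex differentiability. *)
From HB Require Import structures.
From mathcomp Require Import all_boot all_order all_algebra.
From mathcomp Require Import all_classical all_reals all_analysis.
From mathcomp Require Import complex.
Set Implicit Arguments. Unset Strict Implicit. Unset Printing Implicit Defensive.
Import Order.TTheory GRing.Theory Num.Theory.
Import numFieldNormedType.Exports.
Local Open Scope ring_scope.
Local Open Scope classical_set_scope.

Definition Cx (R : realType) := (R[i])^o.

Definition holo_on (R : realType) (D : set (Cx R)) (f : Cx R -> Cx R) :=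
  forall z, D z -> derivable f z 1.

Definition disc (R : realType) (e : Cx R) : set (Cx R) := [set z | `|z| < e].
Definition pdisc (R : realType) (e : Cx R) : set (Cx R) :=
  [set z | 0 < `|z| < e].

(* A meromorphic family: gamma is defined (invertible) on a punctured disc
   0<|z|<eps, its entries are holomorphic there, and each entry has a pole or a
   removable singularity at 0 (i.e. z^N * entry extends holomorphically to 0). *)
Definition meromorphic_family (R : realType) (n : nat)
    (gamma : Cx R -> 'M[Cx R]_n) :=
  exists eps : Cx R, 0 < eps /\
    (forall z, pdisc eps z -> gamma z \in unitmx) /\
    (forall i j, holo_on (pdisc eps) (fun z => gamma z i j)) /\
    (forall i j, exists N : nat, exists h : Cx R -> Cx R,
        holo_on (disc eps) h /\
        forall z, pdisc eps z -> h z = z ^+ N * gamma z i j).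

Definition exponents_of (R : realType) (n : nat)
    (gamma : Cx R -> 'M[Cx R]_n) (m : 'I_n -> int) :=
  (forall i j : 'I_n, (i <= j)%N -> m j <= m i) /\
  exists delta : Cx R, 0 < delta /\
  exists a b : Cx R -> 'M[Cx R]_n,
    (forall i j, holo_on (disc delta) (fun z => a z i j)) /\
    (forall i j, holo_on (disc delta) (fun z => b z i j)) /\
    a 0 \in unitmx /\ b 0 \in unitmx /\
    forall z, pdisc delta z ->
      gamma z = a z *m diag_mx (\row_i (z ^ (- m i))) *m b z.

(* Linear relations P in V (+) V, V = C^n (row vectors), are represented by
   matrices 'M_(n + n) through their row space (mxalgebra, %MS). *)
Definition pr1mx (R : realType) (n : nat) : 'M[Cx R]_(n + n, n) :=
  col_mx 1%:M 0.
Definition pr2mx (R : realType) (n : nat) : 'M[Cx R]_(n + n, n) :=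
  col_mx 0 1%:M.

Definition Dom (R : realType) (n : nat) (P : 'M[Cx R]_(n + n)) : 'M[Cx R]_(n + n, n) :=
  P *m pr1mx R n.
Definition Im (R : realType) (n : nat) (P : 'M[Cx R]_(n + n)) : 'M[Cx R]_(n + n, n) :=
  P *m pr2mx R n.
Definition Ker (R : realType) (n : nat) (P : 'M[Cx R]_(n + n)) : 'M[Cx R]_(n + n, n) :=
  (P :&: row_mx (1%:M : 'M[Cx R]_n) 0)%MS *m pr1mx R n.
Definition Indef (R : realType) (n : nat) (P : 'M[Cx R]_(n + n)) : 'M[Cx R]_(n + n, n) :=
  (P :&: row_mx (0 : 'M[Cx R]_n) 1%:M)%MS *m pr2mx R n.

Definition rk (R : realType) (n : nat) (P : 'M[Cx R]_(n + n)) : nat :=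
  (\rank (Dom P) - \rank (Ker P))%N.

(* graph of A : v |-> A v, as the row space of the rows e_i (+) (A e_i)^T *)
Definition graph (R : realType) (n : nat) (A : 'M[Cx R]_n) : 'M[Cx R]_(n, n + n) :=
  row_mx 1%:M A^T.

(* Convergence in the Grassmannian Gr_n of n-dimensional subspaces of C^n (+) C^n,
   with its standard (quotient-of-frames) topology: S(z) -> P as z -> 0 (z <> 0)
   iff P is n-dimensional and, for z near 0, S(z) admits an n-frame M(z)
   (same row space) converging entrywise to an n-frame of P. *)
Definition gr_lim (R : realType) (n : nat)
    (S : Cx R -> 'M[Cx R]_(n, n + n)) (P : 'M[Cx R]_(n + n)) :=
  \rank P = n /\
  exists (M : Cx R -> 'M[Cx R]_(n, n + n)) (M0 : 'M[Cx R]_(n, n + n)),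
    (\forall z \near (0 : Cx R)^', (M z == S z)%MS /\ \rank (M z) = n) /\
    (forall i j, M z i j @[z --> (0 : Cx R)^'] --> M0 i j) /\
    (M0 == P)%MS /\ \rank M0 = n.

Definition hinge (R : realType) (n k : nat) (P : 'I_k -> 'M[Cx R]_(n + n)) :=
  (forall j, \rank (P j) = n) /\
  (forall j : 'I_k, forall j' : 'I_k, j'.+1 = j :> nat ->
     (Ker (P j') == Dom (P j))%MS /\ (Im (P j') == Indef (P j))%MS) /\
  (forall j : 'I_k, j = 0%N :> nat -> (Dom (P j) == 1%:M)%MS) /\
  (forall j : 'I_k, j.+1 = k -> (Im (P j) == 1%:M)%MS) /\
  (forall j, (0 < rk (P j))%N).

(* Write gamma(z) = a(z) diag(z^-m_i) b(z) and fix an exponent k.  The graph of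
   z^k gamma(z) is spanned by the rows of [1 | (z^k gamma(z))^T]; multiplying
   on the left by the invertible matrix diag(z^(k-m_i)^-) b(z)^-T gives the frame
   [diag(z^(k-m_i)^-) b(z)^-T | diag(z^(k-m_i)^+) a(z)^T], which is continuous at
   z = 0.  Its value there is [E_{m<=k} B | E_{m>=k} A] with B = b(0)^-T and
   A = a(0)^T invertible, where E_S (maskmx S) is the coordinate projection onto
   S; it has rank n because the two index sets cover all i, so its row space is
   the limit P_k.  For the row space of [E_f B | E_g A] one computes Dom = E_f B,
   Ker = E_{f\g} B, Im = E_g A and Indef = E_{g\f} A, whence
   rk P_k = #{i | m_i = k}.  Since the m_i take exactly the values
   k_1 > ... > k_tau, {m < k_j} = {m <= k_(j+1)} and {m > k_(j+1)} = {m >= k_j},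
   which are the hinge conditions. *)

From Pilot Require Import Defs.
From HB Require Import structures.
From mathcomp Require Import all_boot all_order all_algebra.
From mathcomp Require Import all_classical all_reals all_analysis.
From mathcomp Require Import complex.
Set Implicit Arguments. Unset Strict Implicit. Unset Printing Implicit Defensive.
Import Order.TTheory GRing.Theory Num.Theory.
Import numFieldNormedType.Exports.
Local Open Scope ring_scope.
Local Open Scope classical_set_scope.

Section MaskMatrix.
Context {F : fieldType} {n : nat}.
Implicit Types (f g : pred 'I_n).

Definition maskmx f : 'M[F]_n := diag_mx (\row_i (f i)%:R).

Lemma eq_maskmx f g : f =1 g -> maskmx f = maskmx g.
Proof. by move=> fg; congr diag_mx; apply/rowP => i; rewrite !mxE fg. Qed.

Lemma maskmxM f g : maskmx f *m maskmx g = maskmx (predI f g).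
Proof.
by rewrite mulmx_diag; congr diag_mx; apply/rowP => i; rewrite !mxE -natrM mulnb.
Qed.

Lemma maskmxT : maskmx predT = 1%:M.
Proof. by apply/matrixP => i j; rewrite !mxE. Qed.

Lemma maskmx0 : maskmx pred0 = 0.
Proof. by apply/matrixP => i j; rewrite !mxE mul0rn. Qed.

Lemma maskmxD f g :
  (forall i, ~~ (f i && g i)) -> maskmx f + maskmx g = maskmx (predU f g).
Proof.
move=> fg0; apply/matrixP => i j; rewrite !mxE -mulrnDl -natrD.
by move: (fg0 i); rewrite /=; case: (f i); case: (g i).
Qed.

Lemma maskmxC f : maskmx f + maskmx (predC f) = 1%:M.
Proof.
rewrite maskmxD => [|i /=]; last by rewrite andbN.
by rewrite -maskmxT; apply: eq_maskmx => i /=; rewrite orbN.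
Qed.

Lemma row_maskmx f i : row i (maskmx f) = if f i then row i 1%:M else 0.
Proof. by apply/rowP => j; rewrite !mxE; case: (f i); rewrite !mxE ?mul0rn. Qed.

Lemma mxrank_maskmx f : \rank (maskmx f) = #|f|.
Proof.
pose E := rowsub (@enum_val _ (mem f)) (1%:M : 'M[F]_n).
have E_free : row_free E.
  apply/row_freeP; exists E^T; apply/matrixP => k l.
  by rewrite -rowsubE !mxE (inj_eq enum_val_inj) eq_sym.
suff /eqmxP eqE : (E == maskmx f)%MS by rewrite -eqE; exact/eqnP.
apply/andP; split; apply/row_subP => i.
  have fi : f (enum_val i) := enum_valP i.
  rewrite row_rowsub; have := row_maskmx f (enum_val i); rewrite fi => <-.
  exact: row_sub.
rewrite row_maskmx; case: ifP => fi; last exact: sub0mx.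
by rewrite -(enum_rankK_in fi fi) -row_rowsub row_sub.
Qed.

Lemma mxrank_maskmxM f (X : 'M[F]_n) : X \in unitmx -> \rank (maskmx f *m X) = #|f|.
Proof. by move=> unitX; rewrite mxrankMfree ?row_free_unit // mxrank_maskmx. Qed.

Lemma kermx_maskmxM g (X : 'M[F]_n) :
  X \in unitmx -> (kermx (maskmx g *m X) :=: maskmx (predC g))%MS.
Proof.
move=> unitX; apply/eqmxP/andP; split; last first.
  apply/sub_kermxP; rewrite mulmxA maskmxM (eq_maskmx (g := pred0)) ?maskmx0 ?mul0mx //.
  by move=> i /=; rewrite andNb.
set Y := kermx _.
have Yg0 : Y *m maskmx g = 0.
  by rewrite -[LHS](mulmxK unitX) -(mulmxA Y) mulmx_ker mul0mx.
by rewrite -[Y]mulmx1 -(maskmxC g) mulmxDr Yg0 add0r submxMl.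
Qed.

End MaskMatrix.

Lemma eqmx_col_mx0 (F : fieldType) m1 m2 p (X : 'M[F]_(m1, p)) :
  (col_mx X (0 : 'M[F]_(m2, p)) :=: X)%MS.
Proof. exact: eqmx_trans (eqmx_sym (addsmxE _ _)) (addsmx0 _ _). Qed.

Lemma mxrank_row_mx1 (F : fieldType) n p (X : 'M[F]_(n, p)) :
  \rank (row_mx 1%:M X) = n.
Proof.
apply/eqnP/row_freeP; exists (col_mx 1%:M 0).
by rewrite mul_row_col mulmx1 mulmx0 addr0.
Qed.

Section LinearRelations.
Variables (R : realType) (n : nat).
Local Notation K := (Cx R).
Implicit Types (U V : 'M[K]_n) (f g : pred 'I_n).

Definition relmx U V : 'M[K]_(n + n) := col_mx (row_mx U V) 0.

Lemma relmxE U V : (relmx U V :=: row_mx U V)%MS.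
Proof. exact: eqmx_col_mx0. Qed.

Lemma Dom_relmx U V : (Dom (relmx U V) :=: U)%MS.
Proof.
rewrite /Dom /pr1mx mul_col_mx mul0mx mul_row_col mulmx1 mulmx0 addr0.
exact: eqmx_col_mx0.
Qed.

Lemma Im_relmx U V : (Defs.Im (relmx U V) :=: V)%MS.
Proof.
rewrite /Defs.Im /pr2mx mul_col_mx mul0mx mul_row_col mulmx1 mulmx0 add0r.
exact: eqmx_col_mx0.
Qed.

Lemma Ker_relmx U V : (Ker (relmx U V) :=: kermx V *m U)%MS.
Proof.
suff /eqmxP capE : ((relmx U V :&: row_mx 1%:M 0) == row_mx (kermx V *m U) 0)%MS.
  by apply: eqmx_trans (eqmxMr _ capE) _; rewrite mul_row_col mulmx1 mulmx0 addr0.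
apply/andP; split; last first.
  rewrite sub_capmx; apply/andP; split.
    by rewrite relmxE -[X in row_mx _ X](mulmx_ker V) -mul_mx_row submxMl.
  have -> : row_mx (kermx V *m U) (0 : 'M[K]_n) = (kermx V *m U) *m row_mx 1%:M 0.
    by rewrite mul_mx_row mulmx1 mulmx0.
  exact: submxMl.
set C := (_ :&: _)%MS.
have /submxP[Y defC] : (C <= row_mx U V)%MS by rewrite -relmxE capmxSl.
have /submxP[Z defC'] : (C <= row_mx 1%:M 0)%MS by exact: capmxSr.
have : Y *m row_mx U V = Z *m row_mx 1%:M 0 by rewrite -defC.
rewrite !mul_mx_row mulmx1 mulmx0 => /eq_row_mx[_ /sub_kermxP/submxP[W defY]].
by rewrite defC defY -mulmxA mul_mx_row mulmx_ker submxMl.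
Qed.

Lemma Indef_relmx U V : (Indef (relmx U V) :=: kermx U *m V)%MS.
Proof.
suff /eqmxP capE : ((relmx U V :&: row_mx 0 1%:M) == row_mx 0 (kermx U *m V))%MS.
  by apply: eqmx_trans (eqmxMr _ capE) _; rewrite mul_row_col mulmx1 mulmx0 add0r.
apply/andP; split; last first.
  rewrite sub_capmx; apply/andP; split.
    by rewrite relmxE -[X in row_mx X _](mulmx_ker U) -mul_mx_row submxMl.
  have -> : row_mx (0 : 'M[K]_n) (kermx U *m V) = (kermx U *m V) *m row_mx 0 1%:M.
    by rewrite mul_mx_row mulmx1 mulmx0.
  exact: submxMl.
set C := (_ :&: _)%MS.
have /submxP[Y defC] : (C <= row_mx U V)%MS by rewrite -relmxE capmxSl.
have /submxP[Z defC'] : (C <= row_mx 0 1%:M)%MS by exact: capmxSr.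
have : Y *m row_mx U V = Z *m row_mx 0 1%:M by rewrite -defC.
rewrite !mul_mx_row mulmx1 mulmx0 => /eq_row_mx[/sub_kermxP/submxP[W defY] _].
by rewrite defC defY -mulmxA mul_mx_row mulmx_ker submxMl.
Qed.

Section Masked.
Variables (B A : 'M[K]_n).
Hypotheses (unitB : B \in unitmx) (unitA : A \in unitmx).

Definition maskrel f g := relmx (maskmx f *m B) (maskmx g *m A).

Lemma Ker_maskrel f g :
  (Ker (maskrel f g) :=: maskmx [predD f & g] *m B)%MS.
Proof.
apply: eqmx_trans (Ker_relmx _ _) _.
apply: eqmx_trans (eqmxMr _ (kermx_maskmxM g unitA)) _.
by rewrite mulmxA maskmxM (eq_maskmx (g := [predD f & g])) // => i /=; rewrite !inE.
Qed.

Lemma Indef_maskrel f g :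
  (Indef (maskrel f g) :=: maskmx [predD g & f] *m A)%MS.
Proof.
apply: eqmx_trans (Indef_relmx _ _) _.
apply: eqmx_trans (eqmxMr _ (kermx_maskmxM f unitB)) _.
by rewrite mulmxA maskmxM (eq_maskmx (g := [predD g & f])) // => i /=; rewrite !inE.
Qed.

Lemma rk_maskrel f g : rk (maskrel f g) = #|[predI f & g]|.
Proof.
rewrite /rk Dom_relmx Ker_maskrel.
by rewrite !mxrank_maskmxM // -(cardID g f) addnK.
Qed.

Lemma mxrank_maskrel f g : (forall i, f i || g i) -> \rank (maskrel f g) = n.
Proof.
move=> fg; rewrite relmxE; apply/eqnP/row_freeP.
exists (col_mx (invmx B *m maskmx f) (invmx A *m maskmx [pred i | g i && ~~ f i])).
rewrite mul_row_col !mulmxA (mulmxK unitB) (mulmxK unitA) !maskmxM maskmxD => [|i /=].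
  by rewrite -maskmxT; apply: eq_maskmx => i /=; move: (fg i); case: (f i); case: (g i).
by case: (f i); case: (g i).
Qed.

End Masked.

End LinearRelations.

Section EntrywiseLimits.
Context {K : numFieldType} {T : Type} (F : set_system T) {FF : Filter F}.

Lemma cvg_exprn (f : T -> K) (a : K) p : f @ F --> a -> f x ^+ p @[x --> F] --> a ^+ p.
Proof.
move=> fa; elim: p => [|p IHp]; first by under eq_cvg do rewrite expr0; exact: cvg_cst.
by under eq_cvg do rewrite exprS; rewrite exprS; exact: cvgM.
Qed.

Lemma cvg_det p (A : T -> 'M[K]_p) (L : 'M[K]_p) :
  (forall i j, A x i j @[x --> F] --> L i j) -> \det (A x) @[x --> F] --> \det L.
Proof.
move=> AL; apply: (cvg_big add_continuous) => // s _.
apply: cvgM; first exact: cvg_cst.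
by apply: (cvg_big mul_continuous) => // i _; exact: AL.
Qed.

Lemma cvg_invmx p (A : T -> 'M[K]_p) (L : 'M[K]_p) :
  L \in unitmx -> (\forall x \near F, A x \in unitmx) ->
  (forall i j, A x i j @[x --> F] --> L i j) ->
  forall i j, invmx (A x) i j @[x --> F] --> invmx L i j.
Proof.
move=> unitL unitA AL i j.
have invE : {near F, (fun x => (\det (A x))^-1 * \adj (A x) i j) =1
                     (fun x => invmx (A x) i j)}.
  by apply: filterS unitA => x unitAx; rewrite /invmx unitAx !mxE.
apply: cvg_trans (near_eq_cvg invE) _; rewrite /invmx unitL !mxE.
apply: cvgM; first by apply: cvgV; [rewrite -unitfE -unitmxE | exact: cvg_det].
under eq_cvg do rewrite mxE /cofactor; rewrite /cofactor.
apply: cvgM; first exact: cvg_cst.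
by apply: cvg_det => r c; under eq_cvg do rewrite !mxE; rewrite !mxE; exact: AL.
Qed.

End EntrywiseLimits.

Lemma holo_on_disc_cvg0 (R : realType) (e : Cx R) (f : Cx R -> Cx R) :
  0 < e -> holo_on (disc e) f -> f z @[z --> (0 : Cx R)^'] --> f 0.
Proof.
move=> e_gt0 holo_f; apply: cvg_within_filter.
by apply/differentiable_continuous/derivable1_diffP/holo_f; rewrite /disc /= normr0.
Qed.

Lemma gr_lim_frames (R : realType) n (S M : Cx R -> 'M[Cx R]_(n, n + n))
    (M0 : 'M[Cx R]_(n, n + n)) :
  (\forall z \near (0 : Cx R)^', (M z == S z)%MS /\ \rank (M z) = n) ->
  (forall i j, M z i j @[z --> (0 : Cx R)^'] --> M0 i j) -> \rank M0 = n ->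
  gr_lim S (col_mx M0 0).
Proof.
move=> MS MM0 rankM0; split; first by rewrite eqmx_col_mx0.
exists M, M0; do !split => //; apply/eqmxP; exact: eqmx_sym (eqmx_col_mx0 _ _).
Qed.

Definition negpart (e : int) : nat := if e is Negz p then p.+1 else 0.
Definition pospart (e : int) : nat := if e is Posz p then p else 0.

Lemma expr_negpartM (K : fieldType) (z : K) e :
  z != 0 -> z ^+ negpart e * z ^ e = z ^+ pospart e.
Proof. by move=> z0; case: e => p /=; rewrite ?mul1r // mulfV ?expf_neq0. Qed.

Lemma expr0_negpart (K : pzRingType) e :
  (0 : K) ^+ negpart e = ((0 <= e)%R : bool)%:R.
Proof. by case: e => p; rewrite expr0n. Qed.

Lemma expr0_pospart (K : pzRingType) e :
  (0 : K) ^+ pospart e = ((e <= 0)%R : bool)%:R.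
Proof. by case: e => p; rewrite expr0n // lez_nat leqn0. Qed.

Section ScaledFrame.
Context {K : fieldType} {n : nat} (m : 'I_n -> int) (k : int).

Definition scale_lo (z : K) : 'M[K]_n := diag_mx (\row_i z ^+ negpart (k - m i)).
Definition scale_hi (z : K) : 'M[K]_n := diag_mx (\row_i z ^+ pospart (k - m i)).

Lemma scale_lo0 : scale_lo 0 = maskmx [pred i | m i <= k].
Proof. by congr diag_mx; apply/rowP => i; rewrite !mxE expr0_negpart subr_ge0. Qed.

Lemma scale_hi0 : scale_hi 0 = maskmx [pred i | k <= m i].
Proof. by congr diag_mx; apply/rowP => i; rewrite !mxE expr0_pospart subr_le0. Qed.

Lemma scale_lo_unit (z : K) : z != 0 -> scale_lo z \in unitmx.
Proof.
move=> z0; rewrite unitmxE det_diag unitfE; apply/prodf_neq0 => i _.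
by rewrite mxE expf_neq0.
Qed.

Lemma scale_graph (z : K) (A B : 'M[K]_n) : z != 0 -> B \in unitmx ->
  scale_lo z *m (invmx B)^T
    *m row_mx 1%:M (z ^ k *: (A *m diag_mx (\row_i z ^ (- m i)) *m B))^T
  = row_mx (scale_lo z *m (invmx B)^T) (scale_hi z *m A^T).
Proof.
move=> z0 unitB; rewrite mul_mx_row mulmx1; congr row_mx.
have scaleD : z ^ k *: diag_mx (\row_i z ^ (- m i)) = diag_mx (\row_i z ^ (k - m i)).
  by apply/matrixP => i j; rewrite !mxE mulrnAr -expfzDr.
rewrite scalemxAl scalemxAr scaleD.
rewrite !trmx_mul tr_diag_mx !mulmxA -(mulmxA (scale_lo z) (invmx B)^T).
rewrite -trmx_mul (mulmxV unitB) trmx1 mulmx1 mulmx_diag; congr (_ *m _); congr diag_mx.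
by apply/rowP => i; rewrite !mxE expr_negpartM.
Qed.

Definition frame (a b : K -> 'M[K]_n) z : 'M[K]_(n, n + n) :=
  row_mx (scale_lo z *m (invmx (b z))^T) (scale_hi z *m (a z)^T).

Lemma frame0 a b :
  frame a b 0 = row_mx (maskmx [pred i | m i <= k] *m (invmx (b 0))^T)
                       (maskmx [pred i | k <= m i] *m (a 0)^T).
Proof. by rewrite /frame scale_lo0 scale_hi0. Qed.

Lemma frame_eqmx a b z : z != 0 -> b z \in unitmx ->
  (frame a b z
   :=: row_mx 1%:M (z ^ k *: (a z *m diag_mx (\row_i z ^ (- m i)) *m b z))^T)%MS.
Proof.
move=> z0 unit_bz; rewrite /frame -scale_graph //; apply: eqmxMfull.
by rewrite row_full_unit unitmx_mul scale_lo_unit // unitmx_tr unitmx_inv.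
Qed.

End ScaledFrame.

Section FrameLimit.
Context {K : numFieldType} {n : nat} (m : 'I_n -> int) (k : int).
Variables (a b : K -> 'M[K]_n).
Hypothesis cvg_a : forall i j, a z i j @[z --> (0 : K)^'] --> a 0 i j.
Hypothesis cvg_b : forall i j, b z i j @[z --> (0 : K)^'] --> b 0 i j.
Hypothesis b0_unit : b 0 \in unitmx.
Hypothesis b_unit : \forall z \near (0 : K)^', b z \in unitmx.

Lemma cvg_frame i j : frame m k a b z i j @[z --> (0 : K)^'] --> frame m k a b 0 i j.
Proof.
have cvg_z p : z ^+ p @[z --> (0 : K)^'] --> (0 : K) ^+ p.
  by apply: cvg_exprn; apply: cvg_within_filter; exact: cvg_id.
rewrite -[j]splitK; case: (fintype.split j) => j' /=.
  rewrite /frame row_mxEl mul_diag_mx !mxE.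
  under eq_cvg do rewrite row_mxEl mul_diag_mx !mxE.
  by apply: cvgM; [exact: cvg_z | exact: cvg_invmx].
rewrite /frame row_mxEr mul_diag_mx !mxE.
under eq_cvg do rewrite row_mxEr mul_diag_mx !mxE.
by apply: cvgM; [exact: cvg_z | exact: cvg_a].
Qed.

End FrameLimit.

Section ScaledGraphLimit.
Variables (R : realType) (n : nat) (gamma : Cx R -> 'M[Cx R]_n) (m : 'I_n -> int).
Variables (eps delta : Cx R) (a b : Cx R -> 'M[Cx R]_n).
Hypotheses (eps_gt0 : 0 < eps) (delta_gt0 : 0 < delta).
Hypothesis gamma_unit : forall z, pdisc eps z -> gamma z \in unitmx.
Hypothesis a_holo : forall i j, holo_on (disc delta) (fun z => a z i j).
Hypothesis b_holo : forall i j, holo_on (disc delta) (fun z => b z i j).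
Hypotheses (a0_unit : a 0 \in unitmx) (b0_unit : b 0 \in unitmx).
Hypothesis gamma_fact : forall z, pdisc delta z ->
  gamma z = a z *m diag_mx (\row_i z ^ (- m i)) *m b z.
Local Notation K := (Cx R).

Lemma near0_factorization : \forall z \near (0 : K)^',
  [/\ z != 0, b z \in unitmx & gamma z = a z *m diag_mx (\row_i z ^ (- m i)) *m b z].
Proof.
have small e : 0 < e -> \forall z \near (0 : K)^', 0 < `|z| < e.
  move=> e_gt0; near=> z; rewrite normr_gt0; apply/andP; split.
    by near: z; exact: nbhs_dnbhs_neq.
  by near: z; apply: nbhs_dnbhs; exact: (@nbhs0_lt K K _ e_gt0).
apply: filterS2 (small _ eps_gt0) (small _ delta_gt0) => z z_eps z_delta.
have gamma_z := gamma_fact z_delta.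
have := gamma_unit z_eps; rewrite gamma_z !unitmx_mul => /andP[_ ->].
by move: z_eps; rewrite normr_gt0 => /andP[].
Unshelve. all: by end_near.
Qed.

Lemma gr_lim_scaled_graph k :
  gr_lim (fun z => graph (z ^ k *: gamma z))
    (maskrel (invmx (b 0))^T (a 0)^T [pred i | m i <= k] [pred i | k <= m i]).
Proof.
rewrite /maskrel /relmx -frame0; apply: (gr_lim_frames (M := frame m k a b)).
- apply: filterS near0_factorization => z [z0 unit_bz ->].
  have eq_frame := frame_eqmx m k a z0 unit_bz.
  by split; [apply/eqmxP; exact: eq_frame | rewrite eq_frame mxrank_row_mx1].
- apply: cvg_frame => // [i j|i j|].
  + exact: holo_on_disc_cvg0 delta_gt0 (@a_holo i j).
  + exact: holo_on_disc_cvg0 delta_gt0 (@b_holo i j).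
  + by apply: filterS near0_factorization => z [].
rewrite frame0 -relmxE mxrank_maskrel ?unitmx_tr ?unitmx_inv // => i.
exact: le_total.
Qed.

End ScaledGraphLimit.

Section Levels.
Variables (R : realType) (n tau : nat) (m : 'I_n -> int) (k : 'I_tau -> int).
Hypothesis k_decr : forall j j' : 'I_tau, (j < j')%N -> k j' < k j.
Hypothesis m_in_k : forall i, exists j, m i = k j.
Hypothesis k_in_m : forall j, exists i, m i = k j.
Variables (B A : 'M[Cx R]_n).
Hypotheses (unitB : B \in unitmx) (unitA : A \in unitmx).

Lemma ltr_levels l j : (k l < k j) = (j < l)%N.
Proof.
case: (ltngtP j l) => [/k_decr -> // | /k_decr /lt_gtF -> //| /val_inj ->].
by rewrite ltxx.
Qed.

Lemma ler_levels l j : (k l <= k j) = (j <= l)%N.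
Proof. by rewrite leNgt ltr_levels -leqNgt. Qed.

Lemma lt_level_succ (j j' : 'I_tau) i : j'.+1 = j -> (m i < k j') = (m i <= k j).
Proof.
by move=> succ_j'; case: (m_in_k i) => l ->; rewrite ltr_levels ler_levels -succ_j'.
Qed.

Lemma gt_level_succ (j j' : 'I_tau) i : j'.+1 = j -> (k j < m i) = (k j' <= m i).
Proof.
by move=> succ_j'; case: (m_in_k i) => l ->; rewrite ltr_levels ler_levels -succ_j' ltnS.
Qed.

Definition level_rel j := maskrel B A [pred i | m i <= k j] [pred i | k j <= m i].

Lemma rk_level_rel j : rk (level_rel j) = #|[pred i | m i == k j]|.
Proof. by rewrite /level_rel rk_maskrel //; apply: eq_card => i; rewrite !inE eq_le. Qed.

Lemma hinge_level_rel : hinge level_rel.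
Proof.
have rank_n j : \rank (level_rel j) = n.
  by rewrite mxrank_maskrel // => i; exact: le_total.
split=> //; split.
  move=> j j' succ_j'; rewrite !Ker_maskrel // !Indef_maskrel // !Dom_relmx !Im_relmx.
  rewrite (eq_maskmx (g := [pred i | m i <= k j])); last first.
    by move=> i; rewrite /= !inE -ltNge andb_idr; [exact: lt_level_succ | exact: ltW].
  rewrite (eq_maskmx (f := [predD _ & _]) (g := [pred i | k j' <= m i])); last first.
    by move=> i; rewrite /= !inE -ltNge andb_idr; [exact: gt_level_succ | exact: ltW].
  by rewrite !submx_refl.
split.
  move=> j j0; rewrite !Dom_relmx (eq_maskmx (g := predT)) ?maskmxT ?mul1mx.
    by rewrite submx1 sub1mx row_full_unit.
  by move=> i /=; case: (m_in_k i) => l ->; rewrite ler_levels j0 leq0n.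
split.
  move=> j j_last; rewrite !Im_relmx (eq_maskmx (g := predT)) ?maskmxT ?mul1mx.
    by rewrite submx1 sub1mx row_full_unit.
  by move=> i /=; case: (m_in_k i) => l ->; rewrite ler_levels -ltnS j_last ltn_ord.
move=> j; rewrite rk_level_rel; apply/card_gt0P.
by case: (k_in_m j) => i m_i; exists i; rewrite inE m_i.
Qed.

End Levels.

Theorem proposition3p2 (R : realType) (n : nat)
    (gamma : Cx R -> 'M[Cx R]_n) (m : 'I_n -> int)
    (tau : nat) (k : 'I_tau -> int) :
  meromorphic_family gamma ->
  exponents_of gamma m ->
  (* k_1 > ... > k_tau are the distinct values among the m_i *)
  (forall j j' : 'I_tau, (j < j')%N -> k j' < k j) ->
  (forall i, exists j, m i = k j) ->
  (forall j, exists i, m i = k j) ->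
  exists P : 'I_tau -> 'M[Cx R]_(n + n),
    (forall j : 'I_tau,
       gr_lim (fun z => graph ((z ^ k j) *: gamma z)) (P j) /\
       rk (P j) = #|[pred i : 'I_n | m i == k j]|) /\
    hinge P.
Proof.
move=> [eps [eps_gt0 [gamma_unit _]]].
move=> [_ [delta [delta_gt0 [a [b [a_holo [b_holo [a0_unit [b0_unit gamma_fact]]]]]]]]].
move=> k_decr m_in_k k_in_m.
have unitB : (invmx (b 0))^T \in unitmx by rewrite unitmx_tr unitmx_inv.
have unitA : (a 0)^T \in unitmx by rewrite unitmx_tr.
exists (level_rel m k (invmx (b 0))^T (a 0)^T); split; last exact: hinge_level_rel.
move=> j; split; last by rewrite rk_level_rel.
exact: (gr_lim_scaled_graph eps_gt0 delta_gt0 gamma_unit a_holo b_holo).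
Qed.
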